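(* Let $n\ge2$, $g\in H_n\rtimes S_n$ and $i\in I(g)$. Then $g_{[i]}$ lies in the centraliser $C_{H_n\rtimes S_n}(g)$ (in particular $g_{[i]}\in H_n\rtimes S_n$).
   Context: $\mathbb{N}=\{1,2,\dots\}$, $X_n=\{1,\dots,n\}\times\mathbb{N}$, permutations act on the right. $H_n$ is the group of bijections $g$ of $X_n$ with $z_i(g)\in\mathbb{N}$, $t_i(g)\in\mathbb{Z}$ such that $(i,m)g=(i,m+t_i(g))$ for all $m\ge z_i(g)$. $S_n$ acts by $(i,m)\sigma=(i\sigma,m)$; $H_n\rtimes S_n\le\mathrm{Sym}(X_n)$ is generated by $H_n$ and these; each $g$ is uniquely $\omega_g\sigma_g$ with $\omega_g\in H_n$, $\sigma_g\in S_n$, $t_i(g):=t_i(\omega_g)$. $[i]_g$ is the orbit of $i$ under $\langle\sigma_g\rangle$, $t_{[i]}(g)=\sum_{k\in[i]_g}t_k(g)$, $I(g)=\{i:t_{[i]}(g)\ne0\}$. For $i_1\in I(g)$, $m_1\in\mathbb{N}$: $X_{i,m}(g)=\{(i,m')\in X_n: m'\equiv m\bmod|t_{[i]}(g)|\}$ and $X_{[i_1],m_1}(g)=\bigsqcup_{q=1}^{|[i_1]_g|}X_{i_q,m_q}(g)$ with $i_q=i_1\sigma_g^{q-1}$, $m_q=m_1+\sum_{d=1}^{q-1}t_{i_d}(g)$. Sets are almost equal if their symmetric difference is finite. $\sim_g$ is the equivalence relation on $\{[k]_g:k\in I(g)\}$ generated by $[i]_g\sim_g[j]_g$ whenever some $\langle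 g\rangle$-orbit is almost equal to $X_{[i],d}(g)\sqcup X_{[j],e}(g)$ for some $d,e$. $\mathfrak{C}_g([i])=\{k:[k]_g\sim_g[i]_g\}$. $g_{[i]}\in\mathrm{Sym}(X_n)$ is the product of all infinite cycles of $g$ whose support is almost equal to $X_{[j'],d}(g)\sqcup X_{[j''],e}(g)$ for some $j',j''\in\mathfrak{C}_g([i])$ and $d,e\in\mathbb{N}$ (fixing all other points). *)

From HB Require Import structures.
From mathcomp Require Import all_boot all_order all_algebra all_fingroup.
From Stdlib Require Import Relations ClassicalEpsilon.
Set Implicit Arguments. Unset Strict Implicit. Unset Printing Implicit Defensive.
Import GRing.Theory Num.Theory.
Local Open Scope ring_scope.

(* Points of X_n = {1..n} x N.  The pair (i, k) : 'I_n * nat represents the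
   point (i+1, k+1) of X_n (a uniform shift of both coordinates). *)
Definition pt (n : nat) := ('I_n * nat)%type.

Definition transl n (w : pt n -> pt n) (i : 'I_n) (t : int) : Prop :=
  exists z : nat, forall m : nat, (z <= m)%N ->
    (w (i, m)).1 = i /\ ((w (i, m)).2%:Z = m%:Z + t).

Definition in_H n (w : pt n -> pt n) : Prop :=
  bijective w /\ forall i, exists t, transl w i t.

Definition sact n (s : {perm 'I_n}) (x : pt n) : pt n := (s x.1, x.2).

(* g = omega_g sigma_g (right actions: x g = (x omega) sigma), with
   t_i(g) = t_i(omega_g) = t i *)
Definition decomp n (g : pt n -> pt n) (s : {perm 'I_n}) (t : 'I_n -> int) : Prop :=
  exists w, in_H w /\ (forall i, transl w i (t i)) /\ forall x, g x = sact s (w x).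

Definition in_HS n (g : pt n -> pt n) : Prop := exists s t, decomp g s t.

Definition tcl n (s : {perm 'I_n}) (t : 'I_n -> int) (i : 'I_n) : int :=
  \sum_(k in porbit s i) t k.

Definition inI n (s : {perm 'I_n}) (t : 'I_n -> int) (i : 'I_n) : Prop :=
  tcl s t i != 0.

Definition Xim n (s : {perm 'I_n}) (t : 'I_n -> int) (i : 'I_n) (m : int)
  (x : pt n) : Prop :=
  x.1 = i /\ (x.2%:Z %% `|tcl s t i|)%Z = (m %% `|tcl s t i|)%Z.

Definition Xcl n (s : {perm 'I_n}) (t : 'I_n -> int) (i : 'I_n) (m : int)
  (x : pt n) : Prop :=
  exists q : nat, (q < #|porbit s i|)%N /\
    Xim s t ((s ^+ q)%g i) (m + \sum_(d < q) t ((s ^+ d)%g i)) x.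

Definition same_orb n (g : pt n -> pt n) (x y : pt n) : Prop :=
  exists k : nat, iter k g x = y \/ iter k g y = x.

Definition almost_eq n (A B : pt n -> Prop) : Prop :=
  exists l : seq (pt n), forall x, ~ (A x <-> B x) -> x \in l.

Definition infinite_orb n (g : pt n -> pt n) (x : pt n) : Prop :=
  ~ exists l : seq (pt n), forall y, same_orb g x y -> y \in l.

Definition almost_pair n (s : {perm 'I_n}) (t : 'I_n -> int)
  (j : 'I_n) (d : int) (j' : 'I_n) (e : int) (O : pt n -> Prop) : Prop :=
  (forall x, ~ (Xcl s t j d x /\ Xcl s t j' e x)) /\
  almost_eq O (fun x => Xcl s t j d x \/ Xcl s t j' e x).

(* generating relation of ~_g, on representatives in I(g) *)
Definition rel0 n (g : pt n -> pt n) (s : {perm 'I_n}) (t : 'I_n -> int)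
  (a b : 'I_n) : Prop :=
  exists (x0 : pt n) (d e : nat), almost_pair s t a d%:Z b e%:Z (same_orb g x0).

Definition base_rel n (g : pt n -> pt n) (s : {perm 'I_n}) (t : 'I_n -> int)
  (a b : 'I_n) : Prop :=
  inI s t a /\ inI s t b /\ (b \in porbit s a \/ rel0 g s t a b).

Definition inC n (g : pt n -> pt n) (s : {perm 'I_n}) (t : 'I_n -> int)
  (i k : 'I_n) : Prop :=
  inI s t i /\ inI s t k /\ clos_refl_sym_trans _ (base_rel g s t) k i.

Definition in_gi n (g : pt n -> pt n) (s : {perm 'I_n}) (t : 'I_n -> int)
  (i : 'I_n) (x : pt n) : Prop :=
  infinite_orb g x /\
  exists (j j' : 'I_n) (d e : nat),
    inC g s t i j /\ inC g s t i j' /\ almost_pair s t j d%:Z j' e%:Z (same_orb g x).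

Definition gsub n (g : pt n -> pt n) (s : {perm 'I_n}) (t : 'I_n -> int)
  (i : 'I_n) (x : pt n) : pt n :=
  if excluded_middle_informative (in_gi g s t i x) then g x else x.

(* Away from a bounded region, g acts as the affine map (k, m) |-> (s k, m + t k),
   which drifts by t_[k] along each turn of the s-cycle through k.  Hence an
   infinite <g>-orbit escapes upwards in both time directions: forwards along a
   cycle [j] with t_[j] > 0, backwards along a cycle [j'] with t_[j'] < 0, and up
   to finitely many points it is X_{[j],d} ⊔ X_{[j'],e}.  Consequently a high
   point (k, m) lies on an infinite cycle of g_[i] exactly when k ∈ C_g([i]): if
   t_[k] = 0 its orbit is periodic, and otherwise its orbit runs through the
   rows of [k] itself.  So g_[i] eventually agrees with g on the σ_g-invariant
   set of rows C_g([i]) and with the identity elsewhere, which puts it in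
   H_n ⋊ S_n; it commutes with g because its support is a union of <g>-orbits. *)

From mathcomp Require Import all_boot all_order all_algebra all_fingroup.
From mathcomp Require Import zify ring.
From Stdlib Require Import Relations Classical ClassicalEpsilon.
From Stdlib Require Import FunctionalExtensionality PropExtensionality.
Set Implicit Arguments. Unset Strict Implicit. Unset Printing Implicit Defensive.
Import Order.TTheory GRing.Theory Num.Theory.
Local Open Scope ring_scope.

Lemma dvdz_addMr (T a k : int) : (T %| a + k * T)%Z = (T %| a)%Z.
Proof. by rewrite rpredDr // dvdz_mull ?dvdzz. Qed.

Lemma modz_norm_eq (T a b : int) :
  (a %% `|T|)%Z = (b %% `|T|)%Z <-> (T %| a - b)%Z.
Proof. by rewrite !modz_abs -eqz_mod_dvd; split => [->|/eqP]. Qed.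

Section PartialSums.
Variables (n : nat) (s : {perm 'I_n}) (t : 'I_n -> int).

Definition tsum (i : 'I_n) (a : nat) : int := \sum_(d < a) t ((s ^+ d)%g i).

Definition cyc (i : 'I_n) : nat := #|porbit s i|.

Lemma tsum0 i : tsum i 0 = 0. Proof. by rewrite /tsum big_ord0. Qed.

Lemma tsumS i a : tsum i a.+1 = tsum i a + t ((s ^+ a)%g i).
Proof. by rewrite /tsum big_ord_recr. Qed.

Lemma permXD a b i : (s ^+ (a + b))%g i = (s ^+ b)%g ((s ^+ a)%g i).
Proof. by rewrite expgD permM. Qed.

Lemma tsumD i a b : tsum i (a + b) = tsum i a + tsum ((s ^+ a)%g i) b.
Proof.
elim: b => [|b IH]; first by rewrite tsum0 addn0 addr0.
by rewrite addnS !tsumS IH permXD addrA.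
Qed.

Lemma cyc_gt0 i : (0 < cyc i)%N.
Proof. by rewrite lt0n card_porbit_neq0. Qed.

Lemma cyc_le i : (cyc i <= n)%N.
Proof. by rewrite -[X in (_ <= X)%N](card_ord n) max_card. Qed.

Lemma cyc_perm a i : cyc ((s ^+ a)%g i) = cyc i.
Proof. by rewrite /cyc porbit_perm. Qed.

Lemma permX_cyc i : (s ^+ cyc i)%g i = i.
Proof. by rewrite permX iter_porbit. Qed.

Lemma permX_cyc_mul i l : (s ^+ (cyc i * l))%g i = i.
Proof.
elim: l => [|l IH]; first by rewrite muln0 expg0 perm1.
by rewrite mulnS permXD permX_cyc IH.
Qed.

Lemma tcl_porbit j k : k \in porbit s j -> tcl s t k = tcl s t j.
Proof. by move=> jk; rewrite /tcl (eqP (_ : porbit s k == porbit s j)) ?eq_porbit_mem. Qed.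

Lemma tcl_perm a i : tcl s t ((s ^+ a)%g i) = tcl s t i.
Proof. exact/tcl_porbit/mem_porbit. Qed.

Lemma tcl_tsum i : tcl s t i = tsum i (cyc i).
Proof.
rewrite /tcl (eq_bigl (mem (traject s i (cyc i)))); last exact: porbit_traject.
rewrite -big_uniq ?uniq_traject_porbit //.
elim: (cyc i) => [|c IH]; first by rewrite big_nil tsum0.
by rewrite trajectSr big_rcons /= IH tsumS permX.
Qed.

Lemma tsum_cyc_mul i l : tsum i (cyc i * l) = l%:Z * tcl s t i.
Proof.
elim: l => [|l IH]; first by rewrite muln0 tsum0 mul0r.
by rewrite mulnS tsumD -tcl_tsum permX_cyc IH intS mulrDl mul1r.
Qed.

Lemma tsum_cyc_mulD i l r : tsum i (cyc i * l + r) = l%:Z * tcl s t i + tsum i r.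
Proof. by rewrite tsumD tsum_cyc_mul permX_cyc_mul. Qed.

Definition tmax : nat := \max_(k : 'I_n) `|t k|%N.

Lemma tsum_norm_le i r : (`|tsum i r| <= r * tmax)%N.
Proof.
elim: r => [|r IH]; first by rewrite tsum0.
have := @leq_bigmax _ (fun k => `|t k|%N) ((s ^+ r)%g i).
by rewrite tsumS -/tmax; move: IH; lia.
Qed.

Definition tdev : nat := (n * tmax)%N.

Lemma tsum_le_tdev i r : (r <= n)%N -> (`|tsum i r| <= tdev)%N.
Proof. by move=> rn; apply: leq_trans (tsum_norm_le i r) _; rewrite leq_mul2r rn orbT. Qed.

Lemma tsum_ge_div i a :
  (a %/ cyc i)%N%:Z * tcl s t i - tdev%:Z <= tsum i a.
Proof.
have := tsum_cyc_mulD i (a %/ cyc i) (a %% cyc i); rewrite mulnC -divn_eq => ->.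
have ra : (a %% cyc i < cyc i)%N by rewrite ltn_pmod // cyc_gt0.
have := tsum_le_tdev i (ltnW (leq_trans ra (cyc_le i))); lia.
Qed.

End PartialSums.

Section AffineClasses.
Variables (n : nat) (s : {perm 'I_n}) (t : 'I_n -> int).
Local Notation T := (tcl s t).

Lemma Xcl_iff j d (x : pt n) : Xcl s t j d x <->
  exists2 q, (q < cyc s j)%N & x.1 = (s ^+ q)%g j /\ (T j %| x.2%:Z - (d + tsum s t j q))%Z.
Proof.
rewrite /Xcl /Xim; split=> [[q [qc [-> xd]]]|[q qc [-> xd]]]; exists q => //.
  by move: xd; rewrite modz_norm_eq tcl_perm.
by rewrite modz_norm_eq tcl_perm.
Qed.

Lemma XclP j d (x : pt n) : Xcl s t j d x <->
  exists q, x.1 = (s ^+ q)%g j /\ (T j %| x.2%:Z - (d + tsum s t j q))%Z.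
Proof.
rewrite Xcl_iff; split=> [[q _ xq]|[q [xq xd]]]; first by exists q.
exists (q %% cyc s j)%N; first by rewrite ltn_pmod ?cyc_gt0.
rewrite (divn_eq q (cyc s j)) mulnC in xq xd; split.
  by rewrite xq permXD permX_cyc_mul.
rewrite tsum_cyc_mulD in xd; rewrite -(dvdz_addMr _ _ (- (q %/ cyc s j)%N%:Z)).
by congr (_ %| _)%Z: xd; ring.
Qed.

Lemma Xcl_porbit j d (x : pt n) : Xcl s t j d x -> x.1 \in porbit s j.
Proof. by case=> q [_ [-> _]]; apply: mem_porbit. Qed.

Lemma Xcl_sym (x y : pt n) : Xcl s t y.1 y.2%:Z x -> Xcl s t x.1 x.2%:Z y.
Proof.
rewrite !XclP => -[q [xq xd]]; set c := cyc s y.1.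
have qc : (q <= c * q)%N by rewrite leq_pmull ?cyc_gt0.
exists (c * q - q)%N; split.
  by rewrite xq -permXD subnKC // permX_cyc_mul.
have := tsumD s t y.1 q (c * q - q); rewrite subnKC // tsum_cyc_mul -xq.
rewrite [in T x.1]xq tcl_perm => tsumE; rewrite -(dvdz_addMr _ _ q%:Z).
by rewrite (_ : _ + _ = - (x.2%:Z - (y.2%:Z + tsum s t y.1 q))) ?rpredN //; lia.
Qed.

End AffineClasses.

Section Orbits.
Variables (n : nat) (g h : pt n -> pt n).
Hypotheses (gK : cancel g h) (hK : cancel h g).

Lemma iterK a : cancel (iter a g) (iter a h).
Proof. by elim: a => [//|a IH] x; rewrite iterSr iterS gK IH. Qed.

Lemma iterKV a : cancel (iter a h) (iter a g).
Proof. by elim: a => [//|a IH] x; rewrite iterSr iterS hK IH. Qed.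

Lemma iter_g_iter_h a b x : (a <= b)%N -> iter a g (iter b h x) = iter (b - a) h x.
Proof. by move=> ab; rewrite -{1}(subnKC ab) iterD iterKV. Qed.

Lemma same_orbE x y :
  same_orb g x y <-> exists a, y = iter a g x \/ y = iter a h x.
Proof.
split=> -[a [xy|yx]]; exists a.
- by left.
- by right; rewrite -yx iterK.
- by left.
- by right; rewrite yx iterKV.
Qed.

Lemma same_orb_g x : same_orb g (g x) = same_orb g x.
Proof.
apply: functional_extensionality => y; apply: propositional_extensionality.
rewrite !same_orbE.
split=> -[a [->|->]].
- by exists a.+1; left; rewrite iterSr.
- case: a => [|a]; first by exists 1%N; left.
  by exists a; right; rewrite iterSr gK.
- case: a => [|a]; first by exists 1%N; right; rewrite /= gK.
  by exists a; left; rewrite iterSr.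
- by exists a.+1; right; rewrite iterSr gK.
Qed.

Lemma iter_periodic p x q : iter p g x = x -> iter (q * p) g x = x.
Proof. by move=> px; elim: q => [//|q IH]; rewrite mulSn iterD IH px. Qed.

Lemma periodic_finite_orb p x : (0 < p)%N -> iter p g x = x -> ~ infinite_orb g x.
Proof.
move=> p_gt0 px; apply; exists [seq iter r g x | r <- iota 0 p].
have orb_mod a : iter a g x \in [seq iter r g x | r <- iota 0 p].
  apply/mapP; exists (a %% p)%N; first by rewrite mem_iota ltn_pmod.
  by rewrite {1}(divn_eq a p) addnC iterD iter_periodic.
move=> y /same_orbE [a [->|->]] //.
have ap : (a <= a * p)%N by rewrite leq_pmulr.
by rewrite -{1}(iter_periodic a px) -(subnKC ap) iterD iterK.
Qed.

Lemma iter_g_inj x : infinite_orb g x -> injective (fun a => iter a g x).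
Proof.
move=> xinf; suff lt_neq a b : (a < b)%N -> iter a g x <> iter b g x.
  by move=> a b ab; case: (ltngtP a b) => // [/lt_neq|/lt_neq] //; rewrite ab.
move=> ab abx; apply: (periodic_finite_orb (p := b - a) _ _ xinf); first by rewrite subn_gt0.
apply: (can_inj (iterK a)); rewrite -iterD subnKC ?abx //; exact: ltnW.
Qed.

Lemma iter_h_inj x : infinite_orb g x -> injective (fun a => iter a h x).
Proof.
move=> xinf; suff lt_neq a b : (a < b)%N -> iter a h x <> iter b h x.
  by move=> a b ab; case: (ltngtP a b) => // [/lt_neq|/lt_neq] //; rewrite ab.
move=> ab abx; apply: (periodic_finite_orb (p := b - a) _ _ xinf); first by rewrite subn_gt0.
rewrite -{1}(iterKV a x) -iterD subnK ?abx ?iterKV //; exact: ltnW.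
Qed.

End Orbits.

Definition low_pts n (N : nat) : seq (pt n) :=
  [seq (i, m) | i <- enum 'I_n, m <- iota 0 N].

Lemma mem_low_pts n N (x : pt n) : (x.2 < N)%N -> x \in low_pts n N.
Proof.
by case: x => i m /= xN; apply/allpairsP; exists (i, m); rewrite mem_enum mem_iota xN.
Qed.

Lemma seq_height_bound n (l : seq (pt n)) : exists N, forall x, x \in l -> (x.2 < N)%N.
Proof. by exists (\max_(x <- l) x.2).+1 => x xl; rewrite ltnS (leq_bigmax_seq _ xl). Qed.

Lemma almost_eq_high n (A B : pt n -> Prop) N :
  (forall x, (N <= x.2)%N -> A x <-> B x) -> almost_eq A B.
Proof.
move=> AB; exists (low_pts n N) => x ABx; apply: mem_low_pts; rewrite ltnNge.
by apply/negP => /AB.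
Qed.

Lemma injective_eventually_high n (f : nat -> pt n) : injective f ->
  forall N, exists A, forall a, (A <= a)%N -> (N <= (f a).2)%N.
Proof.
move=> f_inj N.
suff [A Al] : exists A, forall a, (A <= a)%N -> f a \notin low_pts n N.
  by exists A => a /Al; apply: contraR; rewrite -ltnNge; apply: mem_low_pts.
elim: (low_pts n N) => [|y l [A Al]]; first by exists 0%N.
case: (classic (exists a, f a = y)) => [[b fb]|no_pre].
  exists (maxn A b.+1) => a; rewrite geq_max => /andP[Aa ba].
  rewrite in_cons negb_or Al // andbT -fb.
  by apply/eqP => /f_inj ab; move: ba; rewrite ab ltnn.
exists A => a Aa; rewrite in_cons negb_or Al // andbT.
by apply/eqP => fa; apply: no_pre; exists a.
Qed.

Lemma pt_eq n (x y : pt n) : x.1 = y.1 -> x.2%:Z = y.2%:Z -> x = y.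
Proof. by case: x y => [x1 x2] [y1 y2] /= -> [->]. Qed.

Section EventuallyAffine.
Variables (n : nat) (g h : pt n -> pt n) (s : {perm 'I_n}) (t : 'I_n -> int) (Z : nat).
Hypotheses (gK : cancel g h) (hK : cancel h g).
Hypothesis gE : forall x : pt n, (Z <= x.2)%N ->
  (g x).1 = s x.1 /\ (g x).2%:Z = x.2%:Z + t x.1.

Local Notation T := (tcl s t).
Local Notation tsum := (tsum s t).
Local Notation cyc := (cyc s).
Local Notation tdev := (tdev t).

Definition high : nat := (Z + 2 * tdev)%N.

Lemma iter_affineS u a :
  (iter a g u).1 = (s ^+ a)%g u.1 /\ (iter a g u).2%:Z = u.2%:Z + tsum u.1 a ->
  (Z <= (iter a g u).2)%N ->
  (iter a.+1 g u).1 = (s ^+ a.+1)%g u.1 /\ (iter a.+1 g u).2%:Z = u.2%:Z + tsum u.1 a.+1.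
Proof.
move=> [ua1 ua2] /gE[g1 g2]; rewrite iterS g1 g2 ua1 ua2 tsumS expgSr permM.
by split => //; rewrite addrA.
Qed.

Lemma iter_affine u a : (forall b, (b < a)%N -> Z%:Z <= u.2%:Z + tsum u.1 b) ->
  (iter a g u).1 = (s ^+ a)%g u.1 /\ (iter a g u).2%:Z = u.2%:Z + tsum u.1 a.
Proof.
elim: a => [|a IH] above; first by rewrite expg0 perm1 tsum0 addr0.
have ua := IH (fun b ba => above b (ltnW ba)).
by apply: (iter_affineS ua); have := above a (ltnSn a); rewrite -ua.2; lia.
Qed.

Lemma iter_affine_high u a : (forall b, (b < a)%N -> (Z <= (iter b g u).2)%N) ->
  (iter a g u).1 = (s ^+ a)%g u.1 /\ (iter a g u).2%:Z = u.2%:Z + tsum u.1 a.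
Proof.
elim: a => [|a IH] above; first by rewrite expg0 perm1 tsum0 addr0.
exact: iter_affineS (IH (fun b ba => above b (ltnW ba))) (above a (ltnSn a)).
Qed.

(* The trajectory never drops below [Z]: after b steps its height is at least
   u.2 + floor(b / cyc u.1) * T u.1 - tdev >= u.2 + min(0, L * T u.1) - tdev. *)
Lemma affine_reach u v q (L : nat) :
  (Z + tdev <= u.2)%N -> (Z + tdev)%:Z <= u.2%:Z + L%:Z * T u.1 ->
  (q < cyc u.1)%N -> v.1 = (s ^+ q)%g u.1 ->
  v.2%:Z = u.2%:Z + L%:Z * T u.1 + tsum u.1 q ->
  iter (cyc u.1 * L + q) g u = v.
Proof.
move=> u_high uL_high qc v1 v2.
have [w1 w2] : (iter (cyc u.1 * L + q) g u).1 = (s ^+ (cyc u.1 * L + q))%g u.1 /\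
    (iter (cyc u.1 * L + q) g u).2%:Z = u.2%:Z + tsum u.1 (cyc u.1 * L + q).
  apply: iter_affine => b bL; have := tsum_ge_div s t u.1 b.
  have : (b %/ cyc u.1 <= L)%N.
    by rewrite -ltnS ltn_divLR ?cyc_gt0 // mulSn mulnC; lia.
  set k := (b %/ cyc u.1)%N => kL; case: (ltrgt0P (T u.1)) => T0.
  - have : 0 <= k%:Z * T u.1 by rewrite mulr_ge0 // ltW.
    lia.
  - have : L%:Z * T u.1 <= k%:Z * T u.1.
      by apply: ler_wnM2r; [exact: ltW | rewrite lez_nat].
    lia.
  - by rewrite T0 mulr0; lia.
apply: pt_eq; first by rewrite w1 v1 permXD permX_cyc_mul.
by rewrite w2 v2 tsum_cyc_mulD addrA.
Qed.

Lemma high_shift_same_orb k m l : T k != 0 -> (high <= m)%N ->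
  same_orb g (k, m) (k, (m + l * `|T k|)%N).
Proof.
rewrite /high => Tk0 m_high; exists (cyc k * l + 0)%N.
case: (ltrgt0P (T k)) Tk0 => // Tk _.
- left; apply: (@affine_reach (k, m) _ 0 l) => /=;
    rewrite ?cyc_gt0 ?expg0 ?perm1 ?tsum0 ?gtr0_norm //; nia.
- right; apply: (@affine_reach (k, (m + l * `|T k|)%N) _ 0 l) => /=;
    rewrite ?cyc_gt0 ?expg0 ?perm1 ?tsum0 ?ltr0_norm //; nia.
Qed.

Lemma high_infinite_orb k m : T k != 0 -> (high <= m)%N -> infinite_orb g (k, m).
Proof.
move=> Tk0 m_high [l orb_l]; have [N lN] := seq_height_bound l.
have Tk_pos : (0 < `|T k|)%N by rewrite absz_gt0.
by have /= := lN _ (orb_l _ (high_shift_same_orb N Tk0 m_high)); nia.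
Qed.

Lemma high_tcl0_finite_orb k m : T k = 0 -> (high <= m)%N -> ~ infinite_orb g (k, m).
Proof.
rewrite /high => Tk0 m_high; apply: (periodic_finite_orb gK hK (cyc_gt0 s k)).
have := @affine_reach (k, m) (k, m) 0 1; rewrite muln1 addn0 /= Tk0 tsum0.
by rewrite expg0 perm1 mulr0 !addr0; apply => //; [lia | lia | exact: cyc_gt0].
Qed.

Lemma almost_pair_high_porbit j d j' e k m :
  almost_eq (same_orb g (k, m)) (fun x => Xcl s t j d x \/ Xcl s t j' e x) ->
  T k != 0 -> (high <= m)%N -> k \in porbit s j \/ k \in porbit s j'.
Proof.
move=> [l orb_l] Tk0 m_high; have [N lN] := seq_height_bound l.
set x := (k, (m + N * `|T k|)%N).
have x_orb : same_orb g (k, m) x := high_shift_same_orb N Tk0 m_high.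
have x_far : x \notin l.
  have Tk_pos : (0 < `|T k|)%N by rewrite absz_gt0.
  by apply/negP => /lN /=; nia.
have [] : Xcl s t j d x \/ Xcl s t j' e x.
  by apply: NNPP => x_out; case/negP: x_far; apply: orb_l; tauto.
- by move=> /Xcl_porbit; left.
- by move=> /Xcl_porbit; right.
Qed.

Lemma iter_cyc_mul_high u l :
  (forall b, (b < cyc u.1 * l)%N -> (Z <= (iter b g u).2)%N) ->
  (iter (cyc u.1 * l) g u).1 = u.1 /\
  (iter (cyc u.1 * l) g u).2%:Z = u.2%:Z + l%:Z * T u.1.
Proof. by move/iter_affine_high => [-> ->]; rewrite permX_cyc_mul tsum_cyc_mul. Qed.

Lemma fwd_tail_tcl_gt0 y : (forall a, (Z <= (iter a g y).2)%N) ->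
  injective (fun a => iter a g y) -> 0 < T y.1.
Proof.
move=> y_high y_inj; have ray l := iter_cyc_mul_high (l := l) (fun b _ => y_high b).
case: (ltrgt0P (T y.1)) => // Ty.
  by have [_] := ray y.2.+1; nia.
have [e1 e2] := ray 1%N; have := cyc_gt0 s y.1.
have : iter (cyc y.1 * 1) g y = iter 0 g y.
  by apply: pt_eq; rewrite ?e1 // e2 Ty mulr0 addr0.
by move/y_inj; rewrite muln1 => ->.
Qed.

Lemma bwd_tail_tcl_lt0 z : (forall a, (Z <= (iter a h z).2)%N) ->
  injective (fun a => iter a h z) -> T z.1 < 0.
Proof.
move=> z_high z_inj.
have ray l : (iter (cyc z.1 * l) h z).1 = z.1 /\
    z.2%:Z = (iter (cyc z.1 * l) h z).2%:Z + l%:Z * T z.1.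
  set u := iter (cyc z.1 * l) h z.
  have [] := @iter_affine_high u (cyc z.1 * l).
    by move=> b bl; rewrite /u (iter_g_iter_h hK) ?z_high // ltnW.
  rewrite /u (iterKV hK) -/u => z1 z2.
  have cu : cyc u.1 = cyc z.1 by rewrite z1 cyc_perm.
  rewrite -cu permX_cyc_mul in z1.
  by rewrite z2 -cu tsum_cyc_mul z1.
case: (ltrgt0P (T z.1)) => // Tz.
  by have [_] := ray z.2.+1; nia.
have [e1 e2] := ray 1%N; have := cyc_gt0 s z.1.
have : iter (cyc z.1 * 1) h z = iter 0 h z.
  by apply: pt_eq; rewrite ?e1 // e2 Tz mulr0 addr0.
by move/z_inj; rewrite muln1 => ->.
Qed.

Lemma fwd_tail_Xcl y a : (forall b, (b < a)%N -> (Z <= (iter b g y).2)%N) ->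
  Xcl s t y.1 y.2%:Z (iter a g y).
Proof. by move/iter_affine_high => [e1 e2]; apply/XclP; exists a; rewrite e1 e2 subrr dvdz0. Qed.

Lemma bwd_tail_Xcl z a : (forall b, (0 < b <= a)%N -> (Z <= (iter b h z).2)%N) ->
  Xcl s t z.1 z.2%:Z (iter a h z).
Proof.
move=> z_high; apply: (@Xcl_sym _ _ _ z (iter a h z)).
rewrite -[X in Xcl _ _ _ _ X](iterKV hK a z); apply: fwd_tail_Xcl => b ba.
rewrite (iter_g_iter_h hK); last exact: ltnW.
by apply: z_high; rewrite subn_gt0 ba leq_subr.
Qed.

Lemma Xcl_reach u v : (Z + tdev <= u.2)%N -> (high <= v.2)%N ->
  Xcl s t u.1 u.2%:Z v ->
  (0 < T u.1 /\ (u.2 + tdev < v.2)%N) \/ (T u.1 < 0 /\ (v.2 + tdev < u.2)%N) ->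
  exists a, v = iter a g u.
Proof.
move=> u_high v_high /Xcl_iff [q qc [v1 /dvdzP [L vL]]] sgn.
have q_small := tsum_le_tdev s t u.1 (ltnW (leq_trans qc (cyc_le s u.1))).
have L_ge0 : 0 <= L by case: sgn => -[Tu uv]; nia.
exists (cyc u.1 * `|L| + q)%N; symmetry.
apply: affine_reach; rewrite ?gez0_abs //; last by rewrite -vL; ring.
by move: v_high q_small vL; rewrite /high; lia.
Qed.

Lemma high_Z m : (high <= m)%N -> (Z <= m)%N.
Proof. by rewrite /high; lia. Qed.

Lemma fwd_tail_orbit y : (forall a, (high <= (iter a g y).2)%N) ->
  injective (fun a => iter a g y) ->
  0 < T y.1 /\ forall x, (y.2 + high < x.2)%N ->
    Xcl s t y.1 y.2%:Z x <-> exists a, x = iter a g y.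
Proof.
move=> y_high y_inj; have Ty := fwd_tail_tcl_gt0 (fun a => high_Z (y_high a)) y_inj.
split=> // x yx; split=> [x_cl | [a ->]].
  apply: Xcl_reach => //; last by left; split=> //; move: yx; rewrite /high; lia.
  - by have := y_high 0%N; rewrite /high /=; lia.
  - by move: yx; lia.
exact: fwd_tail_Xcl (fun b _ => high_Z (y_high b)).
Qed.

Lemma bwd_tail_orbit z : (forall a, (high <= (iter a h z).2)%N) ->
  injective (fun a => iter a h z) ->
  T z.1 < 0 /\ forall x, (z.2 + high < x.2)%N ->
    Xcl s t z.1 z.2%:Z x <-> exists a, x = iter a h z.
Proof.
move=> z_high z_inj; have Tz := bwd_tail_tcl_lt0 (fun a => high_Z (z_high a)) z_inj.
split=> // x zx; split=> [x_cl | [a ->]].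
  have Tx : T x.1 = T z.1 by apply/tcl_porbit/(Xcl_porbit x_cl).
  have [a xz] : exists a, z = iter a g x.
    apply: Xcl_reach (Xcl_sym x_cl) _; first by move: zx; rewrite /high; lia.
    - exact: z_high 0%N.
    - by right; rewrite Tx; split=> //; move: zx; rewrite /high; lia.
  by exists a; rewrite xz (iterK gK).
exact: bwd_tail_Xcl (fun b _ => high_Z (z_high b)).
Qed.

Lemma infinite_orb_pair x0 : infinite_orb g x0 ->
  exists j d j' e, [/\ 0 < T j, T j' < 0 &
    almost_pair s t j d%:Z j' e%:Z (same_orb g x0)].
Proof.
move=> x0_inf.
have [a0 a0_high] := injective_eventually_high (iter_g_inj gK hK x0_inf) high.
have [a1 a1_high] := injective_eventually_high (iter_h_inj gK hK x0_inf) high.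
set y := iter a0 g x0; set z := iter a1 h x0.
have [Ty y_orb] : 0 < T y.1 /\ forall x, (y.2 + high < x.2)%N ->
    Xcl s t y.1 y.2%:Z x <-> exists a, x = iter a g y.
  apply: fwd_tail_orbit => [a | a b]; rewrite /y -!iterD; first exact/a0_high/leq_addl.
  by move/(iter_g_inj gK hK x0_inf)/addIn.
have [Tz z_orb] : T z.1 < 0 /\ forall x, (z.2 + high < x.2)%N ->
    Xcl s t z.1 z.2%:Z x <-> exists a, x = iter a h z.
  apply: bwd_tail_orbit => [a | a b]; rewrite /z -!iterD; first exact/a1_high/leq_addl.
  by move/(iter_h_inj gK hK x0_inf)/addIn.
exists y.1, y.2, z.1, z.2; split=> //; split.
  move=> x [/Xcl_porbit/tcl_porbit yx /Xcl_porbit/tcl_porbit zx].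
  by move: Ty Tz; rewrite -yx -zx; lia.
pose M0 := \max_(b < a0) (iter b g x0).2; pose M1 := \max_(b < a1) (iter b h x0).2.
have M0_ub b : (b < a0)%N -> ((iter b g x0).2 <= M0)%N.
  by move=> ba0; apply: (@leq_bigmax _ (fun b : 'I_a0 => (iter b g x0).2) (Ordinal ba0)).
have M1_ub b : (b < a1)%N -> ((iter b h x0).2 <= M1)%N.
  by move=> ba1; apply: (@leq_bigmax _ (fun b : 'I_a1 => (iter b h x0).2) (Ordinal ba1)).
apply: (almost_eq_high (N := (M0 + M1 + y.2 + z.2 + high).+1)) => x xN.
have [yx zx] : (y.2 + high < x.2)%N /\ (z.2 + high < x.2)%N by lia.
rewrite (same_orbE gK hK); split=> [[b [xb|xb]] | [/(y_orb _ yx) [a ->] | /(z_orb _ zx) [a ->]]].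
- case: (ltnP b a0) => [/M0_ub | a0b]; first by rewrite -xb; lia.
  by left; apply/(y_orb _ yx); exists (b - a0)%N; rewrite xb /y -iterD subnK.
- case: (ltnP b a1) => [/M1_ub | a1b]; first by rewrite -xb; lia.
  by right; apply/(z_orb _ zx); exists (b - a1)%N; rewrite xb /z -iterD subnK.
- by exists (a + a0)%N; left; rewrite iterD.
- by exists (a + a1)%N; right; rewrite iterD.
Qed.

End EventuallyAffine.

Definition restrict (T : Type) (P : T -> Prop) (f : T -> T) (x : T) : T :=
  if excluded_middle_informative (P x) then f x else x.

Lemma restrict_in T (P : T -> Prop) f x : P x -> restrict P f x = f x.
Proof. by rewrite /restrict; case: excluded_middle_informative. Qed.

Lemma restrict_out T (P : T -> Prop) f x : ~ P x -> restrict P f x = x.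
Proof. by rewrite /restrict; case: excluded_middle_informative. Qed.

Lemma restrict_equiv T (P Q : T -> Prop) f x :
  (P x <-> Q x) -> restrict P f x = restrict Q f x.
Proof.
move=> PQ; case: (classic (P x)) => Px.
  by rewrite !restrict_in // -PQ.
by rewrite !restrict_out // -PQ.
Qed.

Section Restrict.
Variables (T : Type) (P : T -> Prop) (f : T -> T).
Hypothesis Pf : forall x, P (f x) <-> P x.

Lemma restrict_comm x : restrict P f (f x) = f (restrict P f x).
Proof.
case: (classic (P x)) => Px; first by rewrite !restrict_in // Pf.
by rewrite !restrict_out // Pf.
Qed.

Lemma restrict_bij : bijective f -> bijective (restrict P f).
Proof.
case=> f' fK f'K; have Pf' x : P (f' x) <-> P x by rewrite -Pf f'K.
exists (restrict P f') => x; case: (classic (P x)) => Px.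
- by rewrite restrict_in // restrict_in ?Pf.
- by rewrite !restrict_out.
- by rewrite restrict_in // restrict_in ?Pf'.
- by rewrite !restrict_out.
Qed.

End Restrict.

Section Classes.
Variables (n : nat) (g : pt n -> pt n) (s : {perm 'I_n}) (t : 'I_n -> int) (i : 'I_n).

Lemma inC_base_rel j k : base_rel g s t j k -> inC g s t i j <-> inC g s t i k.
Proof.
move=> jk; have [Ij [Ik _]] := jk.
split=> -[Ii [_ ri]]; split=> //; split=> //.
- by apply: rst_trans ri; apply/rst_sym/rst_step.
- by apply: rst_trans ri; apply: rst_step.
Qed.

Lemma inC_porbit j k : k \in porbit s j -> inC g s t i j -> inC g s t i k.
Proof.
move=> jk Cj; apply/(inC_base_rel (j := j)) => //; split; first by case: Cj => _ [].
by split; [rewrite /inI (tcl_porbit t jk); case: Cj => _ [] | left].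
Qed.

Lemma inC_perm k : inC g s t i (s k) <-> inC g s t i k.
Proof.
have ksk : s k \in porbit s k by have := mem_porbit s 1 k; rewrite expg1.
by split; apply: inC_porbit; rewrite // porbit_sym.
Qed.

End Classes.

Section SupportOfGi.
Variables (n : nat) (g h : pt n -> pt n) (s : {perm 'I_n}) (t : 'I_n -> int) (Z : nat).
Hypotheses (gK : cancel g h) (hK : cancel h g).
Hypothesis gE : forall x : pt n, (Z <= x.2)%N ->
  (g x).1 = s x.1 /\ (g x).2%:Z = x.2%:Z + t x.1.
Variable i : 'I_n.

Lemma in_gi_g x : in_gi g s t i (g x) <-> in_gi g s t i x.
Proof. by rewrite /in_gi /infinite_orb (same_orb_g gK hK). Qed.

Lemma in_gi_high k m : (high t Z <= m)%N -> in_gi g s t i (k, m) <-> inC g s t i k.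
Proof.
move=> m_high; split.
  move=> [k_inf [j [j' [d [e [Cj [Cj' [_ orb_eq]]]]]]]].
  have [Tk0 | Tk0] := eqVneq (tcl s t k) 0.
    by case: (high_tcl0_finite_orb gK hK gE Tk0 m_high).
  by case: (almost_pair_high_porbit gE orb_eq Tk0 m_high) => /inC_porbit; [apply | apply].
move=> Ck; have Tk0 : tcl s t k != 0 by case: Ck => _ [].
have k_inf := high_infinite_orb gE Tk0 m_high.
have [j [d [j' [e [Tj Tj' jj']]]]] := infinite_orb_pair gK hK gE k_inf.
have rel_jj' : base_rel g s t j j'.
  by split; [exact: lt0r_neq0 | split; [exact: ltr0_neq0 | right; exists (k, m), d, e]].
have [Cj Cj'] : inC g s t i j /\ inC g s t i j'.
  case: (almost_pair_high_porbit gE jj'.2 Tk0 m_high); rewrite porbit_sym => /inC_porbit /(_ Ck).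
    by move=> Cj; split; last by apply/(inC_base_rel _ rel_jj').
  by move=> Cj'; split; first by apply/(inC_base_rel _ rel_jj').
by split=> //; exists j, j', d, e.
Qed.

End SupportOfGi.

Lemma sact_bij n (s : {perm 'I_n}) : bijective (sact s).
Proof. by exists (sact s^-1%g) => -[k m]; rewrite /sact /= ?permK ?permKV. Qed.

Lemma decomp_eventually_affine n (g : pt n -> pt n) (s : {perm 'I_n}) (t : 'I_n -> int) :
  decomp g s t ->
  exists h Z, [/\ cancel g h, cancel h g & forall x : pt n, (Z <= x.2)%N ->
    (g x).1 = s x.1 /\ (g x).2%:Z = x.2%:Z + t x.1].
Proof.
move=> [w [[[w' wK w'K] _] [w_t gw]]]; have [sV sK sVK] := sact_bij s.
have [z zP] := @ClassicalEpsilon.choice _ _ _ w_t.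
exists (w' \o sV), (\max_k z k)%N; split=> [x | x | [k m] /= m_high].
- by rewrite gw /= sK wK.
- by rewrite gw /= w'K sVK.
- by rewrite gw /=; have [-> ->] := zP k m (leq_trans (leq_bigmax k) m_high).
Qed.

Lemma restrict_perm n (P : 'I_n -> Prop) (s : {perm 'I_n}) :
  (forall k, P (s k) <-> P k) -> exists s' : {perm 'I_n}, forall k, s' k = restrict P s k.
Proof.
move=> Ps; have s_bij : bijective s by exists s^-1%g; [exact: permK | exact: permKV].
by exists (perm (bij_inj (restrict_bij Ps s_bij))) => k; rewrite permE.
Qed.

Lemma in_HS_eventually_restrict n (g f : pt n -> pt n) (s : {perm 'I_n})
  (t : 'I_n -> int) (Z : nat) (P : 'I_n -> Prop) :
  (forall x : pt n, (Z <= x.2)%N -> (g x).1 = s x.1 /\ (g x).2%:Z = x.2%:Z + t x.1) ->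
  (forall k, P (s k) <-> P k) -> bijective f ->
  (forall x : pt n, (Z <= x.2)%N -> f x = restrict (fun y => P y.1) g x) ->
  in_HS f.
Proof.
move=> gE Ps f_bij fE; have [s' s'E] := restrict_perm Ps.
pose t' k := if excluded_middle_informative (P k) then t k else 0.
have w_t k : transl (sact s'^-1%g \o f) k (t' k).
  exists Z => m m_high; rewrite /= fE // /t'.
  case: excluded_middle_informative => Pk /=.
    have [g1 g2] := gE (k, m) m_high.
    by rewrite restrict_in // /sact /= g1 g2 -(restrict_in s Pk) -s'E permK.
  by rewrite restrict_out // /sact /= -{1}(restrict_out s Pk) -s'E permK addr0.
exists s', t', (sact s'^-1%g \o f); split; last split => //.
  by split; [exact/bij_comp/f_bij/sact_bij | move=> k; exists (t' k)].
by move=> x; rewrite /= /sact /= permKV -surjective_pairing.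
Qed.

Theorem lemma4p19 (n : nat) (hn : (2 <= n)%N) (g : pt n -> pt n)
  (s : {perm 'I_n}) (t : 'I_n -> int) (hg : decomp g s t)
  (i : 'I_n) (hi : inI s t i) :
  in_HS (gsub g s t i) /\ (forall x, gsub g s t i (g x) = g (gsub g s t i x)).
Proof.
have [h [Z [gK hK gE]]] := decomp_eventually_affine hg.
have gi_inv := in_gi_g s t gK hK i.
split; last exact: restrict_comm.
apply: (@in_HS_eventually_restrict _ g _ s t (high t Z) (inC g s t i)).
- by move=> x /high_Z; apply: gE.
- exact: inC_perm.
- by apply: restrict_bij => //; exists h.
- move=> [k m] m_high; apply: restrict_equiv; exact: in_gi_high gK hK gE i k m m_high.
Qed.
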